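(* Let $\ell$ be a commutative unital ring, $A,B$ (associative, not necessarily unital) $\ell$-algebras, and $n,r,s\geq 0$. Let $C:=B^{\mathfrak{S}_n}_r$ and let $H:A\to C^{\mathrm{sd}^sI}$ be an $\ell$-algebra homomorphism (a homotopy between the two homomorphisms $(d^0)^*\circ H,(d^1)^*\circ H:A\to C$, where $d^0,d^1:\Delta^0=\mathrm{sd}^s\Delta^0\to\mathrm{sd}^sI$ are induced by the two vertex inclusions of $I=\Delta^1$). Then there exists an $\ell$-algebra homomorphism $\widetilde{H}:A\to\widetilde{B}^{\mathfrak{S}_n}_{r+s}$ such that for $i=0,1$ \[(d^i)^*\circ\widetilde{H}=\tau\circ(d^i)^*\circ H,\] where on the left $(d^i)^*:\widetilde{B}^{\mathfrak{S}_n}_{r+s}\to B^{\mathfrak{S}_n}_{r+s}$ is induced by $\mathrm{id}\times d^i: I^n\cong I^n\times\Delta^0\to I^n\times I$, and $\tau:B^{\mathfrak{S}_n}_r\to B^{\mathfrak{S}_n}_{r+s}$ is the composite of $s$ transition maps of the directed diagram $B^{\mathfrak{S}_n}_\bullet$ (induced by the iterated last vertex map).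
   Context: $\mathbb{Z}^\Delta$ is the simplicial ring $[p]\mapsto \mathbb{Z}[t_0,\dots,t_p]/\langle 1-\sum t_i\rangle$ (an order preserving $\varphi:[p]\to[q]$ acts by $t_i\mapsto\sum_{\varphi(j)=i}t_j$). For an $\ell$-algebra $D$, $D^\Delta$ is the simplicial $\ell$-algebra $[p]\mapsto D\otimes_{\mathbb{Z}}\mathbb{Z}^{\Delta^p}$, and for a simplicial set $X$, $D^X:=\mathrm{Hom}_{\mathbb{S}}(X,D^\Delta)$ with pointwise operations. $\mathrm{sd}$ is the subdivision functor and $\gamma:\mathrm{sd}\to\mathrm{id}$ the last vertex map. For a finite simplicial set $K$ with simplicial subset $L$, $D^{(K,L)}_r:=\ker(D^{\mathrm{sd}^rK}\to D^{\mathrm{sd}^rL})$, and $D^{(K,L)}_\bullet$ is the directed diagram $D^{(K,L)}_0\to D^{(K,L)}_1\to\cdots$ with maps induced by $\gamma_{\mathrm{sd}^rK}:\mathrm{sd}^{r+1}K\to\mathrm{sd}^rK$. $I=\Delta^1$, $\partial I=\{0,1\}$, $I^n$ is the $n$-fold product ($I^0=\Delta^0$), $\partial I^n=\bigcup_j I\times\cdots\times\partial I\times\cdots\times I$ ($\partial I^0=\emptyset$). Notation: $B^{\mathfrak{S}_n}_r:=B^{(I^n,\partial I^n)}_r$ and $\widetilde{B}^{\mathfrak{S}_n}_r:=B^{(I^n\times I,\partial I^n\times I)}_r$. *)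

From HB Require Import structures.
From mathcomp Require Import all_boot all_order all_algebra.
From mathcomp Require Import mpoly.
From Stdlib Require Import ClassicalEpsilon.

Set Implicit Arguments.
Unset Strict Implicit.
Unset Printing Implicit Defensive.

Import GRing.Theory.

(*    All simplicial sets in the statement (I^n, I^n x I, Delta^0, I, and   *)
(*    their iterated subdivisions) are nerves of finite posets.             *)

Record fposet := FPoset {
  pcar :> finType;
  ple : rel pcar;
  ple_refl : reflexive ple;
  ple_anti : antisymmetric ple;
  ple_trans : transitive ple }.

(* order preserving maps = simplicial maps between nerves *)
Record mono (P Q : fposet) := Mono {
  mfun :> P -> Q;
  mfunP : forall x y, ple x y -> ple (mfun x) (mfun y) }.

Definition mono_id (P : fposet) : mono P P := @Mono P P id (fun _ _ h => h).

Definition mono_comp (P Q R : fposet) (g : mono Q R) (f : mono P Q) : mono P R :=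
  @Mono P R (fun x => g (f x)) (fun x y h => mfunP g (mfunP f h)).

Lemma ordP_anti q : antisymmetric (fun i j : 'I_q.+1 => (i <= j)%N).
Proof. by move=> i j /anti_leq/val_inj. Qed.
Definition ordP (q : nat) : fposet :=
  @FPoset 'I_q.+1 (fun i j => (i <= j)%N) (fun i => leqnn i) (@ordP_anti q)
    (fun j i k => @leq_trans j i k).

(* p-simplices of the nerve N P : order preserving maps [p] -> P *)
Definition simplex (P : fposet) (p : nat) :=
  {x : {ffun 'I_p.+1 -> P} | [forall i : 'I_p.+1, forall j : 'I_p.+1,
                                 (i <= j)%N ==> ple (x i) (x j)]}.

Lemma simcomp_proof (P : fposet) p q (x : simplex P q) (phi : simplex (ordP q) p) :
  [forall i : 'I_p.+1, forall j : 'I_p.+1,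
     (i <= j)%N ==> ple ([ffun k => val x (val phi k)] i)
                        ([ffun k => val x (val phi k)] j)].
Proof.
apply/forallP=> i; apply/forallP=> j; apply/implyP=> hij; rewrite !ffunE.
have /forallP/(_ i)/forallP/(_ j)/implyP/(_ hij) := valP phi.
by move=> h; have /forallP/(_ (val phi i))/forallP/(_ (val phi j))/implyP := valP x; apply.
Qed.

(* the simplicial operator phi^* of N P, for phi : [p] -> [q] *)
Definition simcomp (P : fposet) p q (x : simplex P q) (phi : simplex (ordP q) p)
  : simplex P p := Sub [ffun k => val x (val phi k)] (simcomp_proof x phi).

Lemma monocomp_proof (P Q : fposet) (g : mono P Q) p (x : simplex P p) :
  [forall i : 'I_p.+1, forall j : 'I_p.+1,
     (i <= j)%N ==> ple ([ffun k => g (val x k)] i) ([ffun k => g (val x k)] j)].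
Proof.
apply/forallP=> i; apply/forallP=> j; apply/implyP=> hij; rewrite !ffunE.
apply: mfunP.
by have /forallP/(_ i)/forallP/(_ j)/implyP := valP x; apply.
Qed.

(* the simplicial map N g : N P -> N Q on p-simplices *)
Definition monocomp (P Q : fposet) (g : mono P Q) p (x : simplex P p) : simplex Q p :=
  Sub [ffun k => g (val x k)] (monocomp_proof g x).

Lemma vertex_proof (P : fposet) (x : P) :
  [forall i : 'I_1, forall j : 'I_1,
     (i <= j)%N ==> ple ([ffun=> x] i) ([ffun=> x] j)].
Proof.
by apply/forallP=> i; apply/forallP=> j; apply/implyP=> _; rewrite !ffunE ple_refl.
Qed.
Definition vertex (P : fposet) (x : P) : simplex P 0 := Sub [ffun=> x] (vertex_proof x).

Definition simimg (P : fposet) p (x : simplex P p) : {set P} :=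
  [set val x i | i : 'I_p.+1].

(* ---- subdivision: sd (N P) = N (poset of nonempty chains of P) -------- *)
(* A nonempty chain is stored together with its (unique) maximum. *)
Definition is_chain_top (P : fposet) (ct : {set P} * P) :=
  [&& ct.2 \in ct.1, [forall x in ct.1, ple x ct.2] &
      [forall x in ct.1, forall y in ct.1, ple x y || ple y x]].

Definition sdT (P : fposet) := {ct : {set P} * P | is_chain_top ct}.

Lemma sd_anti (P : fposet) :
  antisymmetric (fun a b : sdT P => (val a).1 \subset (val b).1).
Proof.
move=> [[c t] ht] [[c' t'] ht'] /=.
rewrite -eqEsubset => /eqP ec; subst c'; apply: val_inj => /=.
case/and3P: ht => tc tmax _; case/and3P: ht' => tc' tmax' _.
congr pair; apply: (@ple_anti P); apply/andP; split.
  by move/forall_inP: tmax'; apply.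
by move/forall_inP: tmax; apply.
Qed.

Definition sd (P : fposet) : fposet :=
  @FPoset (sdT P) (fun a b => (val a).1 \subset (val b).1)
    (fun a => subxx _) (@sd_anti P) (fun b a c => @subset_trans _ _ _ _).

(* the last vertex map gamma : sd (N P) -> N P  (a chain |-> its maximum) *)
Lemma gamma_proof (P : fposet) (a b : sd P) :
  ple a b -> ple (val a).2 (val b).2.
Proof.
case: a b => [[c t] /= /and3P[tc _ _]] [[c' t'] /= /and3P[_ tmax' _]] /= sub.
by move/forall_inP: tmax'; apply; apply: (subsetP sub).
Qed.
Definition gamma (P : fposet) : mono (sd P) P :=
  @Mono (sd P) P (fun a => (val a).2) (@gamma_proof P).

Lemma sdmap_chain (P Q : fposet) (g : mono P Q) (a : sd P) :
  is_chain_top (g @: (val a).1, g (val a).2).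
Proof.
case: a => [[c t] /= /and3P[tc tmax tcmp]] /=.
apply/and3P; split; first exact: imset_f.
  apply/forall_inP=> _ /imsetP[x xc ->]; apply: mfunP.
  by move/forall_inP: tmax; apply.
apply/forall_inP=> _ /imsetP[x xc ->]; apply/forall_inP=> _ /imsetP[y yc ->].
move/forall_inP: tcmp => /(_ x xc)/forall_inP/(_ y yc)/orP[h|h].
  by rewrite mfunP.
by rewrite orbC mfunP.
Qed.
Definition sdmap_fun (P Q : fposet) (g : mono P Q) (a : sd P) : sd Q :=
  Sub (g @: (val a).1, g (val a).2) (sdmap_chain g a).
Lemma sdmap_proof (P Q : fposet) (g : mono P Q) (a b : sd P) :
  ple a b -> ple (sdmap_fun g a) (sdmap_fun g b).
Proof. by move=> h; apply: imsetS. Qed.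
Definition sdmap (P Q : fposet) (g : mono P Q) : mono (sd P) (sd Q) :=
  @Mono (sd P) (sd Q) (sdmap_fun g) (@sdmap_proof P Q g).

Lemma sdvertex_proof (P : fposet) (x : P) : is_chain_top ([set x], x).
Proof.
apply/and3P; split; first by rewrite set11.
  by apply/forall_inP=> y /set1P ->; rewrite ple_refl.
apply/forall_inP=> y /set1P ->; apply/forall_inP=> z /set1P ->.
by rewrite ple_refl.
Qed.
Definition sdvertex (P : fposet) (x : P) : sd P := Sub ([set x], x) (sdvertex_proof x).

Fixpoint sdn (s : nat) (P : fposet) : fposet :=
  match s with 0 => P | s'.+1 => sd (sdn s' P) end.

Fixpoint sdn_map (s : nat) (P Q : fposet) (g : mono P Q)
  : mono (sdn s P) (sdn s Q) :=
  match s return mono (sdn s P) (sdn s Q) with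
  | 0 => g
  | s'.+1 => sdmap (sdn_map s' g)
  end.

Fixpoint gamman (s r : nat) (P : fposet) : mono (sdn (s + r) P) (sdn r P) :=
  match s return mono (sdn (s + r) P) (sdn r P) with
  | 0 => mono_id (sdn r P)
  | s'.+1 => mono_comp (gamman s' r P) (gamma (sdn (s' + r) P))
  end.

(* A simplicial subset L of N P is encoded by the predicate on vertex sets:
   a simplex x of N P lies in L iff  Lp (simimg x).  For such L, sd L is the
   simplicial subset of N (sd P) consisting of the chains of chains whose
   largest element (= the union of the chain) is a simplex of L. *)
Fixpoint sdsub (s : nat) (P : fposet) (Lp : {set P} -> bool)
  : {set sdn s P} -> bool :=
  match s return {set sdn s P} -> bool with
  | 0 => Lp
  | s'.+1 => fun C => @sdsub s' P Lp (\bigcup_(c in C) (val c).1)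
  end.

(* iterated vertices: the unique point of sd^s (Delta^0) is iterated {.} *)
Fixpoint sdn_vertex (s : nat) (P : fposet) (x : P) : sdn s P :=
  match s return sdn s P with
  | 0 => x
  | s'.+1 => sdvertex (@sdn_vertex s' P x)
  end.

Definition unitP : fposet :=
  @FPoset unit (fun _ _ => true) (fun _ => erefl) (fun x y _ => match x, y with tt, tt => erefl end)
    (fun _ _ _ _ _ => erefl).

(* I = Delta^1 = N({0 < 1}) ; false = vertex 0, true = vertex 1 *)
Lemma Iposet_anti : antisymmetric (fun a b : bool => a ==> b).
Proof. by case; case. Qed.
Lemma Iposet_trans : transitive (fun a b : bool => a ==> b).
Proof. by case; case; case. Qed.
Definition Iposet : fposet :=
  @FPoset bool (fun a b => a ==> b) implybb Iposet_anti Iposet_trans.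

(* I^n = N({0<1}^n), the n-fold product (I^0 = Delta^0) *)
Lemma cube_refl n : reflexive (fun f g : {ffun 'I_n -> bool} => [forall j, f j ==> g j]).
Proof. by move=> f; apply/forallP=> j; rewrite implybb. Qed.
Lemma cube_anti n : antisymmetric (fun f g : {ffun 'I_n -> bool} => [forall j, f j ==> g j]).
Proof.
move=> f g /andP[/forallP h1 /forallP h2]; apply/ffunP=> j.
by move: (h1 j) (h2 j); case: (f j); case: (g j).
Qed.
Lemma cube_trans n : transitive (fun f g : {ffun 'I_n -> bool} => [forall j, f j ==> g j]).
Proof.
move=> g f h /forallP h1 /forallP h2; apply/forallP=> j.
by move: (h1 j) (h2 j); case: (f j); case: (g j); case: (h j).
Qed.
Definition cube (n : nat) : fposet :=
  @FPoset {ffun 'I_n -> bool} (fun f g => [forall j, f j ==> g j])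
    (@cube_refl n) (@cube_anti n) (@cube_trans n).

(* products of posets (the nerve preserves products) *)
Lemma prodP_refl (P Q : fposet) : reflexive (fun a b : P * Q => ple a.1 b.1 && ple a.2 b.2).
Proof. by move=> a; rewrite !ple_refl. Qed.
Lemma prodP_anti (P Q : fposet) : antisymmetric (fun a b : P * Q => ple a.1 b.1 && ple a.2 b.2).
Proof.
move=> [a1 a2] [b1 b2] /= /andP[/andP[h1 h2] /andP[h3 h4]].
by congr pair; apply: ple_anti; rewrite ?h1 ?h2 ?h3 ?h4.
Qed.
Lemma prodP_trans (P Q : fposet) : transitive (fun a b : P * Q => ple a.1 b.1 && ple a.2 b.2).
Proof.
move=> b a c /andP[h1 h2] /andP[h3 h4].
by rewrite (ple_trans h1 h3) (ple_trans h2 h4).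
Qed.
Definition prodP (P Q : fposet) : fposet :=
  @FPoset (P * Q)%type (fun a b => ple a.1 b.1 && ple a.2 b.2)
    (@prodP_refl P Q) (@prodP_anti P Q) (@prodP_trans P Q).

Definition cubeI (n : nat) : fposet := prodP (cube n) Iposet.

Definition vinc (i : bool) : mono unitP Iposet :=
  @Mono unitP Iposet (fun _ => i) (fun _ _ _ => implybb i).

Lemma idxd_proof n (i : bool) (x y : cube n) :
  ple x y -> ple ((x, i) : cubeI n) (y, i).
Proof. by move=> h; apply/andP; split; [exact: h | exact: implybb]. Qed.
Definition idxd (n : nat) (i : bool) : mono (cube n) (cubeI n) :=
  @Mono (cube n) (cubeI n) (fun x => (x, i)) (@idxd_proof n i).

(* boundary dI^n = union_j I x..x dI x..x I : a simplex lies in it iff some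
   coordinate j is constant on it (dI = {0,1} has only constant simplices) *)
Definition bdry (n : nat) (S : {set cube n}) : bool :=
  [exists j : 'I_n, [forall a in S, forall b in S, a j == b j]].

Definition bdryI (n : nat) (S : {set cubeI n}) : bool :=
  [exists j : 'I_n, [forall a in S, forall b in S, a.1 j == b.1 j]].

Local Open Scope ring_scope.

Record nalg (L : comPzRingType) := NAlg {
  ncar :> lmodType L;
  nmul : ncar -> ncar -> ncar;
  nmulA : associative nmul;
  nmulDl : left_distributive nmul +%R;
  nmulDr : right_distributive nmul +%R;
  nmulZl : forall (a : L) (x y : ncar), nmul (a *: x) y = a *: nmul x y;
  nmulZr : forall (a : L) (x y : ncar), nmul x (a *: y) = a *: nmul x y }.

(* The algebras built below (D^Delta, D^X, kernels) are described
   concretely: [rcar] is an ambient carrier, [rmem] singles out the actual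
   elements of the algebra, and the operations are the (pointwise /
   polynomial) ones.  The algebra in question is {x | rmem x} with these
   operations. *)
Record ralg (L : comPzRingType) := RAlg {
  rcar : Type;
  rmem : rcar -> Prop;
  rzero : rcar;
  radd : rcar -> rcar -> rcar;
  ropp : rcar -> rcar;
  rscale : L -> rcar -> rcar;
  rmul : rcar -> rcar -> rcar }.

Definition ralg_of (L : comPzRingType) (A : nalg L) : ralg L :=
  @RAlg L A (fun _ => True) 0 +%R -%R *:%R (@nmul L A).
Coercion ralg_of : nalg >-> ralg.

Definition is_hom (L : comPzRingType) (A : nalg L) (C : ralg L) (f : A -> rcar C) :=
  [/\ forall a, rmem (f a),
      forall a b, f (a + b) = radd (f a) (f b),
      forall (k : L) a, f (k *: a) = rscale k (f a) &
      forall a b, f (nmul a b) = rmul (f a) (f b)].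

(* 3. D^Delta_p = D (x)_Z Z[t_0..t_p]/<1 - sum t_i>.                        *)
(*    Using the ring isomorphism Z[t_0..t_p]/<1-sum t_i> = Z[t_1..t_p]      *)
(*    (t_0 |-> 1 - t_1 - ... - t_p), D^Delta_p is D[t_1..t_p]: an element   *)
(*    is its coefficient function on monomials 'X_{1..p} (variable k : 'I_p *)
(*    of 'X_{1..p} stands for t_(k+1)), required to have finite support.    *)

Section DeltaPoly.
Variables (L : comPzRingType) (D : ralg L).

Definition rsum (I : Type) (r : seq I) (P : pred I) (F : I -> rcar D) :=
  \big[@radd L D / rzero D]_(i <- r | P i) F i.

Definition rnatmul (x : rcar D) (k : nat) : rcar D := iter k (radd x) (rzero D).
Definition rintmul (x : rcar D) (z : int) : rcar D :=
  match z with Posz k => rnatmul x k | Negz k => ropp (rnatmul x k.+1) end.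

Definition polcar (p : nat) := 'X_{1..p} -> rcar D.

Definition finsupp p (f : polcar p) :=
  exists s : seq 'X_{1..p}, forall m, m \notin s -> f m = rzero D.

Definition pmem p (f : polcar p) := finsupp f /\ forall m, rmem (f m).
Definition pzero p : polcar p := fun _ => rzero D.
Definition padd p (f g : polcar p) : polcar p := fun m => radd (f m) (g m).
Definition popp p (f : polcar p) : polcar p := fun m => ropp (f m).
Definition pscale p (k : L) (f : polcar p) : polcar p := fun m => rscale k (f m).
Definition pmul p (f g : polcar p) : polcar p := fun m =>
  rsum [seq bmnm m1 | m1 <- enum {: 'X_{1..p < (mdeg m).+1}}]
       (fun m1 => (m1 <= m)%MM)
       (fun m1 => rmul (f m1) (g (m - m1)%MM)).

(* a duplicate-free list containing the support of f (if f is finitely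
   supported) *)
Definition suppseq p (f : polcar p) : seq 'X_{1..p} :=
  epsilon (inhabits [::])
    (fun s => uniq s /\ forall m, m \notin s -> f m = rzero D).

(* the generator t_j of Z^Delta^p (j : [p]) written in Z[t_1..t_p] *)
Definition tvar (p : nat) (j : 'I_p.+1) : {mpoly int[p]} :=
  if unlift ord0 j is Some k then 'X_k else 1 - \sum_(k < p) 'X_k.

Definition timg p q (phi : simplex (ordP q) p) (i : 'I_q.+1) : {mpoly int[p]} :=
  \sum_(j : 'I_p.+1 | val phi j == i) tvar j.

Definition mimg p q (phi : simplex (ordP q) p) (m : 'X_{1..q}) : {mpoly int[p]} :=
  \prod_(k < q) timg phi (lift ord0 k) ^+ m k.

Definition ppull p q (phi : simplex (ordP q) p) (f : polcar q) : polcar p :=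
  fun m' => rsum (suppseq f) predT (fun m => rintmul (f m) (mcoeff m' (mimg phi m))).

(* 4. D^X = Hom_sSet(X, D^Delta) for X = N P, and D^(K,L).                  *)

Definition fam (P : fposet) := forall p, simplex P p -> polcar p.

Definition natural (P : fposet) (f : fam P) :=
  forall p q (x : simplex P q) (phi : simplex (ordP q) p),
    f p (simcomp x phi) = ppull phi (f q x).

Definition DX (P : fposet) : ralg L :=
  @RAlg L (fam P)
    (fun f => (forall p x, pmem (f p x)) /\ natural f)
    (fun p _ => @pzero p)
    (fun f g p x => padd (f p x) (g p x))
    (fun f p x => popp (f p x))
    (fun k f p x => pscale k (f p x))
    (fun f g p x => pmul (f p x) (g p x)).

(* D^(K,L) = ker (D^K -> D^L) for K = N P and L the simplicial subset
   encoded by Lp (a simplex x is in L iff Lp (simimg x)) *)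
Definition DK (P : fposet) (Lp : {set P} -> bool) : ralg L :=
  @RAlg L (fam P)
    (fun f => @rmem L (DX P) f /\
       forall p (x : simplex P p), Lp (simimg x) -> f p x = @pzero p)
    (@rzero L (DX P)) (@radd L (DX P)) (@ropp L (DX P))
    (@rscale L (DX P)) (@rmul L (DX P)).

Definition pull (P Q : fposet) (g : mono P Q) (f : fam Q) : fam P :=
  fun p x => f p (monocomp g x).

(* D^(Delta^0) = D^Delta_0 = D: value at a vertex *)
Definition evpt (P : fposet) (f : fam P) (x : P) : rcar D :=
  f 0 (vertex x) 0%MM.

End DeltaPoly.

(* B^{S_n}_r = B^(sd^r I^n, sd^r dI^n) *)
Definition BS (L : comPzRingType) (B : ralg L) (n r : nat) : ralg L :=
  DK B (@sdsub r (cube n) (@bdry n)).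

(* tilde B^{S_n}_r = B^(sd^r (I^n x I), sd^r (dI^n x I)) *)
Definition BSt (L : comPzRingType) (B : ralg L) (n r : nat) : ralg L :=
  DK B (@sdsub r (cubeI n) (@bdryI n)).

Definition dstar (L : comPzRingType) (C : ralg L) (s : nat) (i : bool)
  (h : rcar (DX C (sdn s Iposet))) : rcar C :=
  evpt (pull (sdn_map s (vinc i)) h) (sdn_vertex s (tt : unitP)).

Definition dstarB (L : comPzRingType) (B : ralg L) (n m : nat) (i : bool)
  (f : rcar (BSt B n m)) : rcar (BS B n m) :=
  pull (sdn_map m (idxd n i)) f.

Definition tau (L : comPzRingType) (B : ralg L) (n r s : nat)
  (f : rcar (BS B n r)) : rcar (BS B n (s + r)) :=
  pull (gamman s r (cube n)) f.

(* An element h of C^(sd^s I) assigns to each p-simplex y of sd^s I a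
   polynomial h(y) in C[t_1..t_p], and each coefficient of h(y) assigns to a
   p-simplex x of sd^r I^n a polynomial in B[t_1..t_p].  Multiplying out,
   h(y)(x) = sum_(m1, m2) h(y)_m1(x)_m2 t^(m1 + m2) is an element of
   B^(sd^r I^n x sd^s I); it depends multiplicatively on h because Z^Delta is
   commutative, and naturally on (x, y) because the simplicial operators of
   Z^Delta are ring maps.  Define H~ by restricting it along
   sd^(r+s)(I^n x I) -> sd^r I^n x sd^s I, z |-> (gamma^s (sd pr1 z),
   sd^s(gamma^r) (sd pr2 z)).  The first component maps sd^(r+s)(dI^n x I)
   into sd^r dI^n, so H~ lands in the relative algebra; on the end
   sd^(r+s)(I^n x {i}) the second component is constant at the vertex i and
   the first is gamma^s, which gives (d^i)^* H~ = tau (d^i)^* H. *)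

From mathcomp Require Import all_boot all_order all_algebra.
From mathcomp Require Import mpoly.
From Stdlib Require Import ClassicalEpsilon FunctionalExtensionality.
From mathcomp Require Import zify.

Set Implicit Arguments.
Unset Strict Implicit.
Unset Printing Implicit Defensive.

Import GRing.Theory.

Lemma sd_chain_inj (P : fposet) (a b : sd P) : (val a).1 = (val b).1 -> a = b.
Proof. by move=> e; apply: (@ple_anti (sd P)); rewrite /= e subxx. Qed.

Lemma sd_top_in (P : fposet) (a : sd P) : (val a).2 \in (val a).1.
Proof. by case/and3P: (valP a). Qed.

Lemma sdn_mapK k (P Q : fposet) (f : mono P Q) (g : mono Q P) :
  cancel f g -> cancel (sdn_map k f) (sdn_map k g).
Proof.
move=> fK; elim: k => [|k IH] w //=.
by apply: sd_chain_inj => /=; rewrite -imset_comp (eq_imset _ IH) imset_id.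
Qed.

Lemma sdn_map_comp_cst k (P Q R : fposet) (f : mono P Q) (g : mono Q R) c :
  (forall x, g (f x) = c) -> forall w, sdn_map k g (sdn_map k f w) = sdn_vertex k c.
Proof.
move=> gf_c; elim: k => [|k IH] w //=.
apply: sd_chain_inj => /=; apply/setP=> y; rewrite in_set1.
apply/imsetP/eqP => [[_ /imsetP[x _ ->] ->]|->]; first exact: IH.
by exists (sdn_map k f (val w).2); rewrite ?imset_f ?sd_top_in ?IH.
Qed.

Lemma sdn_map_vertex k (P Q : fposet) (g : mono P Q) x :
  sdn_map k g (sdn_vertex k x) = sdn_vertex k (g x).
Proof. by elim: k => [|k IH] //=; apply: sd_chain_inj => /=; rewrite imset_set1 IH. Qed.

Fixpoint gamma_iter (k : nat) (P : fposet) : mono (sdn k P) P :=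
  match k return mono (sdn k P) P with
  | 0 => mono_id P
  | k'.+1 => mono_comp (gamma_iter k' P) (gamma (sdn k' P))
  end.

(* sd^s of gamma_iter r; the recursion on s keeps the source convertible to
   sdn (s + r) P *)
Fixpoint sd_gamma_iter (s r : nat) (P : fposet) : mono (sdn (s + r) P) (sdn s P) :=
  match s return mono (sdn (s + r) P) (sdn s P) with
  | 0 => gamma_iter r P
  | s'.+1 => sdmap (sd_gamma_iter s' r P)
  end.

Lemma gamma_iter_vertex k (P : fposet) x : gamma_iter k P (sdn_vertex k x) = x.
Proof. by elim: k => [|k IH] //=. Qed.

Lemma sd_gamma_iter_vertex s r (P : fposet) x :
  sd_gamma_iter s r P (sdn_vertex (s + r) x) = sdn_vertex s x.
Proof.
elim: s => [|s IH] /=; first exact: gamma_iter_vertex.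
by apply: sd_chain_inj => /=; rewrite imset_set1 IH.
Qed.

Definition dclosed (P : fposet) (Lp : {set P} -> bool) :=
  forall T U : {set P}, T \subset U -> Lp U -> Lp T.

Lemma dclosed_sdsub k (P : fposet) (Lp : {set P} -> bool) :
  dclosed Lp -> dclosed (@sdsub k P Lp).
Proof.
move=> Lp_dc; elim: k => [|k IH] //= T U TU; apply: IH.
by apply/bigcupsP => c cT; apply: bigcup_sup (subsetP TU c cT).
Qed.

Lemma sdsub_map k (P Q : fposet) (f : mono P Q) (Lp : {set P} -> bool)
    (Lq : {set Q} -> bool) :
  dclosed Lq -> (forall S, Lp S -> Lq (f @: S)) ->
  forall S, @sdsub k P Lp S -> @sdsub k Q Lq (sdn_map k f @: S).
Proof.
move=> Lq_dc fL; elim: k => [|k IH] S /=; first exact: fL.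
move/IH; apply: dclosed_sdsub => //; apply/bigcupsP => _ /imsetP[c cS ->] /=.
by apply: imsetS; apply: bigcup_sup cS.
Qed.

Lemma sdsub_gamman s r (P : fposet) (Lp : {set P} -> bool) : dclosed Lp ->
  forall S, @sdsub (s + r) P Lp S -> @sdsub r P Lp (gamman s r P @: S).
Proof.
move=> Lp_dc; elim: s => [|s IH] S /= S_L.
  by apply: (dclosed_sdsub Lp_dc _ S_L); apply/subsetP => _ /imsetP[x xS ->].
have gS_L : @sdsub (s + r) P Lp (gamma (sdn (s + r) P) @: S).
  apply: (dclosed_sdsub Lp_dc _ S_L); apply/subsetP => _ /imsetP[c cS ->].
  by apply/bigcupP; exists c => //; apply: sd_top_in.
apply: (dclosed_sdsub Lp_dc _ (IH _ gS_L)).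
apply/subsetP => _ /imsetP[x xS ->].
by apply: imset_f; apply: (imset_f (gamma (sdn (s + r) P)) xS).
Qed.

Lemma fst_mono_proof (P Q : fposet) (a b : prodP P Q) : ple a b -> ple a.1 b.1.
Proof. by case/andP. Qed.
Definition fst_mono (P Q : fposet) : mono (prodP P Q) P := Mono (@fst_mono_proof P Q).

Lemma snd_mono_proof (P Q : fposet) (a b : prodP P Q) : ple a b -> ple a.2 b.2.
Proof. by case/andP. Qed.
Definition snd_mono (P Q : fposet) : mono (prodP P Q) Q := Mono (@snd_mono_proof P Q).

Lemma bdry_dclosed n : dclosed (@bdry n).
Proof.
move=> T U TU /existsP[j /forall_inP U_j]; apply/existsP; exists j.
apply/forall_inP => a aT; apply/forall_inP => b bT.
by move/forall_inP: (U_j a (subsetP TU a aT)); apply; apply: (subsetP TU).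
Qed.

Lemma bdryI_fst n (S : {set cubeI n}) : bdryI S -> bdry (fst_mono _ _ @: S).
Proof.
case/existsP=> j /forall_inP S_j; apply/existsP; exists j.
apply/forall_inP => _ /imsetP[a aS ->]; apply/forall_inP => _ /imsetP[b bS ->].
by move/forall_inP: (S_j a aS); apply.
Qed.

Lemma simimg_monocomp (P Q : fposet) (g : mono P Q) p (x : simplex P p) :
  simimg (monocomp g x) = g @: simimg x.
Proof. by rewrite /simimg -imset_comp; apply: eq_imset => i /=; rewrite ffunE. Qed.

Lemma monocomp_simcomp (P Q : fposet) (g : mono P Q) p q (z : simplex P q)
    (phi : simplex (ordP q) p) :
  monocomp g (simcomp z phi) = simcomp (monocomp g z) phi.
Proof. by apply: val_inj; apply/ffunP => k; rewrite /= !ffunE. Qed.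

Lemma monocomp_comp (P Q R : fposet) (g : mono Q R) (f : mono P Q) p (x : simplex P p) :
  monocomp g (monocomp f x) = monocomp (mono_comp g f) x.
Proof. by apply: val_inj; apply/ffunP => k; rewrite /= !ffunE. Qed.

Lemma eq_monocomp (P Q : fposet) (f g : mono P Q) p (x : simplex P p) :
  f =1 g -> monocomp f x = monocomp g x.
Proof. by move=> fg; apply: val_inj; apply/ffunP => k; rewrite /= !ffunE. Qed.

Lemma monocomp_vertex (P Q : fposet) (g : mono P Q) (x : P) :
  monocomp g (vertex x) = vertex (g x).
Proof. by apply: val_inj; apply/ffunP => k; rewrite /= !ffunE. Qed.

Lemma bang_proof p : [forall i : 'I_p.+1, forall j : 'I_p.+1,
  (i <= j)%N ==> ple ([ffun=> (ord0 : ordP 0)] i) ([ffun=> (ord0 : ordP 0)] j)].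
Proof. by apply/forallP => i; apply/forallP => j; apply/implyP; rewrite !ffunE. Qed.
Definition bang p : simplex (ordP 0) p := Sub [ffun=> (ord0 : ordP 0)] (bang_proof p).

Lemma monocomp_cst (P Q : fposet) (g : mono P Q) (c : Q) p (x : simplex P p) :
  (forall w, g w = c) -> monocomp g x = simcomp (vertex c) (bang p).
Proof. by move=> g_c; apply: val_inj; apply/ffunP => k; rewrite /= !ffunE. Qed.

Section Families.
Variables (L : comPzRingType) (D : ralg L).

Lemma fam_ext (P : fposet) (f g : fam D P) :
  (forall p x m, f p x m = g p x m) -> f = g.
Proof.
move=> fg; apply: functional_extensionality_dep => p.
by apply: functional_extensionality => x; apply: functional_extensionality.
Qed.

Lemma eq_pull (P Q : fposet) (f g : mono P Q) (F : fam D Q) :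
  f =1 g -> pull f F = pull g F.
Proof. by move=> fg; apply: fam_ext => p x m; rewrite /pull (eq_monocomp _ fg). Qed.

Lemma evpt_pull (P Q : fposet) (g : mono P Q) (F : fam D Q) x :
  evpt (pull g F) x = evpt F (g x).
Proof. by rewrite /evpt /pull monocomp_vertex. Qed.

Lemma finsupp_bound q (f : polcar D q) :
  finsupp f -> exists N, forall m, (N <= mdeg m)%N -> f m = rzero D.
Proof.
case=> l f_l; exists (\max_(m <- l) (mdeg m).+1) => m le_Nm; apply: f_l.
by apply: contraTN le_Nm => ml; rewrite -ltnNge; apply: leq_bigmax_seq.
Qed.

Lemma suppseq_spec q (f : polcar D q) :
  finsupp f -> uniq (suppseq f) /\ forall m, m \notin suppseq f -> f m = rzero D.
Proof.
case=> l f_l; apply: (epsilon_spec (inhabits [::])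
  (fun s => uniq s /\ forall m, m \notin s -> f m = rzero D)).
by exists (undup l); split=> [|m]; rewrite ?undup_uniq ?mem_undup; last exact: f_l.
Qed.

End Families.

Lemma exists_bound_seq (T : eqType) (l : seq T) (Pb : T -> nat -> Prop) :
  (forall t N N', (N <= N')%N -> Pb t N -> Pb t N') ->
  (forall t, t \in l -> exists N, Pb t N) -> exists N, forall t, t \in l -> Pb t N.
Proof.
move=> Pb_mono; elim: l => [|x l IH] l_Pb; first by exists 0%N.
have [N1 x_N1] := l_Pb x (mem_head _ _).
have [N2 l_N2] : exists N, forall t, t \in l -> Pb t N.
  by apply: IH => t tl; apply: l_Pb; rewrite in_cons tl orbT.
exists (maxn N1 N2) => t; rewrite in_cons => /orP[/eqP->|tl].
  by apply: Pb_mono x_N1; rewrite leq_maxl.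
by apply: Pb_mono (l_N2 t tl); rewrite leq_maxr.
Qed.

Local Open Scope ring_scope.

Section BigSupport.
Variable V : zmodType.

Lemma big_supp_eq (T : eqType) (s1 s2 : seq T) (G : T -> V) :
  uniq s1 -> uniq s2 -> (forall x, x \notin s1 -> G x = 0) ->
  (forall x, x \notin s2 -> G x = 0) ->
  \sum_(x <- s1) G x = \sum_(x <- s2) G x.
Proof.
move=> s1_uniq s2_uniq G_s1 G_s2; apply: perm_big_supp.
apply: uniq_perm; rewrite ?filter_uniq // => x; rewrite !mem_filter.
have [//|G_x] := eqVneq (G x) 0.
have in_supp s : (forall y, y \notin s -> G y = 0) -> x \in s.
  by move=> G_s; apply: contraT => /G_s /eqP; rewrite (negPf G_x).
by rewrite !in_supp.
Qed.

Lemma big_seq_pred1 (T : eqType) (s : seq T) e (G : T -> V) : uniq s ->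
  \sum_(w <- s) (if e == w then G w else 0) = if e \in s then G e else 0.
Proof.
elim: s => [|x s IH]; first by rewrite big_nil.
rewrite cons_uniq big_cons in_cons => /andP[xs s_uniq]; rewrite IH //.
by case: eqP => [->|_] /=; rewrite ?(negPf xs) ?addr0 ?add0r.
Qed.

Lemma sum_if0 (b : bool) (I : Type) (r : seq I) (G : I -> V) :
  (if b then \sum_(i <- r) G i else 0) = \sum_(i <- r) (if b then G i else 0).
Proof. by case: b; rewrite // big1. Qed.

Lemma exchange_big3 (I J K : Type) (ri : seq I) (rj : seq J) (rk : seq K)
    (F : I -> J -> K -> V) :
  \sum_(i <- ri) \sum_(j <- rj) \sum_(k <- rk) F i j k =
  \sum_(k <- rk) \sum_(i <- ri) \sum_(j <- rj) F i j k.
Proof.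
transitivity (\sum_(i <- ri) \sum_(k <- rk) \sum_(j <- rj) F i j k).
  by apply: eq_bigr => i _; apply: exchange_big.
exact: exchange_big.
Qed.

End BigSupport.

(** * Convolution of multinomial-indexed families *)

Section Convolution.
Variables (p : nat) (V : zmodType).
Implicit Types (m a b : 'X_{1..p}) (F : 'X_{1..p} -> 'X_{1..p} -> V).

Definition mons (N : nat) : seq 'X_{1..p} :=
  [seq bmnm x | x <- enum {: 'X_{1..p < N}}].

Lemma mons_uniq N : uniq (mons N).
Proof. by rewrite map_inj_uniq ?enum_uniq //; apply: val_inj. Qed.

Lemma mem_mons N m : (m \in mons N) = (mdeg m < N)%N.
Proof.
apply/mapP/idP => [[b _ ->]|m_N]; first exact: bmdeg.
by exists (BMultinom m_N); rewrite ?mem_enum.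
Qed.

Lemma lem_mdeg a m : (a <= m)%MM -> (mdeg a <= mdeg m)%N.
Proof. by move=> am; rewrite -(submK am) mdegD leq_addl. Qed.

Lemma addmACA a b c d : (a + b + (c + d) = a + c + (b + d))%MM.
Proof. by apply/mnmP => i; rewrite !mnmDE addnACA. Qed.

Lemma addm_eqE a b m : ((a + b)%MM == m) = (a <= m)%MM && ((m - a)%MM == b).
Proof.
apply/eqP/andP => [<-|[am /eqP <-]]; last by rewrite addmC submK.
by rewrite lem_addr; split => //; rewrite addmC addmK.
Qed.

(* Syntactically the sum in [pmul], so that products unfold to [conv]. *)
Definition conv F m := \sum_(a <- mons (mdeg m).+1 | (a <= m)%MM) F a (m - a)%MM.

Definition supported_below N F :=
  forall a b, (N <= mdeg a)%N || (N <= mdeg b)%N -> F a b = 0.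

Lemma eq_conv F G : (forall a b, F a b = G a b) -> conv F =1 conv G.
Proof. by move=> FG m; apply: eq_bigr => a _. Qed.

Lemma conv_pairs N F m : (mdeg m < N)%N ->
  conv F m = \sum_(a <- mons N) \sum_(b <- mons N)
               (if (a + b == m)%MM then F a b else 0).
Proof.
move=> m_N; rewrite /conv big_mkcond /=.
transitivity (\sum_(a <- mons N) if (a <= m)%MM then F a (m - a)%MM else 0).
  apply: big_supp_eq; rewrite ?mons_uniq // => a; rewrite mem_mons;
    case: ifP => // /lem_mdeg a_m.
    by rewrite ltnS a_m.
  by rewrite (leq_ltn_trans a_m m_N).
apply: eq_bigr => a _; case: ifP => am; last first.
  by rewrite big1 // => b _; rewrite addm_eqE am.
under eq_bigr => b _ do rewrite addm_eqE am /=.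
by rewrite big_seq_pred1 ?mons_uniq // mem_mons (leq_ltn_trans (mdegB m a)).
Qed.

Lemma conv_pairs_supp N F m : supported_below N F ->
  conv F m = \sum_(a <- mons N) \sum_(b <- mons N)
               (if (a + b == m)%MM then F a b else 0).
Proof.
move=> F_N; rewrite (@conv_pairs (mdeg m).+1) //.
have sum_b a : \sum_(b <- mons (mdeg m).+1) (if (a + b == m)%MM then F a b else 0) =
               \sum_(b <- mons N) (if (a + b == m)%MM then F a b else 0).
  apply: big_supp_eq; rewrite ?mons_uniq // => b; rewrite mem_mons.
    by case: eqP => // <-; rewrite mdegD ltnS leq_addl.
  by rewrite -leqNgt => b_N; case: ifP => // _; apply: F_N; rewrite b_N orbT.
rewrite (eq_bigr _ (fun a _ => sum_b a)); apply: big_supp_eq; rewrite ?mons_uniq //.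
  move=> a; rewrite mem_mons => a_m; rewrite big1 // => b _.
  by case: eqP => // m_ab; move: a_m; rewrite -m_ab mdegD ltnS leq_addr.
move=> a; rewrite mem_mons -leqNgt => a_N; rewrite big1 // => b _.
by case: ifP => // _; apply: F_N; rewrite a_N.
Qed.

Lemma conv_eq0 N F m : supported_below N F -> (N + N <= mdeg m)%N -> conv F m = 0.
Proof.
move=> F_N le_m; rewrite /conv big1 // => a am; apply: F_N.
by rewrite -(submK am) mdegD in le_m; apply/orP; lia.
Qed.

Lemma conv_delta0 (G : 'X_{1..p} -> V) m :
  conv (fun a b => if a == 0%MM then G b else 0) m = G m.
Proof.
rewrite /conv big_mkcond (bigD1_seq 0%MM) ?mons_uniq ?mem_mons ?mdeg0 //=.
rewrite eqxx subm0 big1 ?addr0 => [|a /negPf-> /=]; last by case: ifP.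
by have -> : (0 <= m)%MM by apply/mnm_lepP => i; rewrite mnm0E.
Qed.

Lemma sum_conv_regroup N F (K : 'X_{1..p} -> int) : supported_below N F ->
  \sum_(w <- mons (N + N)) conv F w *~ K w =
  \sum_(a <- mons N) \sum_(b <- mons N) F a b *~ K (a + b)%MM.
Proof.
move=> F_N.
under eq_bigr => w _ do rewrite (conv_pairs_supp _ F_N) mulrz_suml.
rewrite exchange_big; apply: eq_big_seq => a; rewrite mem_mons => a_N.
under eq_bigr => w _ do rewrite mulrz_suml.
rewrite exchange_big; apply: eq_big_seq => b; rewrite mem_mons => b_N /=.
under eq_bigr => w _ do rewrite (fun_if (fun x => x *~ K w)) mul0rz.
rewrite (@big_seq_pred1 _ _ _ _ (fun w => F a b *~ K w)) ?mons_uniq // mem_mons mdegD.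
by have -> : (mdeg a + mdeg b < N + N)%N by lia.
Qed.

Lemma conv3E (K : 'X_{1..p} -> 'X_{1..p} -> 'X_{1..p} -> 'X_{1..p} -> V) m
    (s := mons (mdeg m).+1) :
  conv (fun m1 m2 => conv (fun u v => conv (K u v) m2) m1) m =
  \sum_(u <- s) \sum_(v <- s) \sum_(c <- s) \sum_(d <- s)
     (if (u + v + (c + d) == m)%MM then K u v c d else 0).
Proof.
pose T m1 m2 u v c d := if (m1 + m2 == m)%MM then if (u + v == m1)%MM then
  if (c + d == m2)%MM then K u v c d else 0 else 0 else 0.
have expand m1 m2 :
    (if (m1 + m2 == m)%MM then conv (fun u v => conv (K u v) m2) m1 else 0) =
    \sum_(u <- s) \sum_(v <- s) \sum_(c <- s) \sum_(d <- s) T m1 m2 u v c d.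
  rewrite /T; case: eqP => [m12|_]; last first.
    by rewrite big1 // => u _; rewrite big1 // => v _; rewrite big1 // => c _;
       rewrite big1.
  have m1_s : (mdeg m1 < (mdeg m).+1)%N by rewrite ltnS -m12 mdegD leq_addr.
  have m2_s : (mdeg m2 < (mdeg m).+1)%N by rewrite ltnS -m12 mdegD leq_addl.
  rewrite (conv_pairs _ m1_s); apply: eq_bigr => u _; apply: eq_bigr => v _.
  by rewrite (conv_pairs _ m2_s) sum_if0; apply: eq_bigr => c _; rewrite sum_if0.
have collapse u v c d : \sum_(m1 <- s) \sum_(m2 <- s) T m1 m2 u v c d =
    if (u + v + (c + d) == m)%MM then K u v c d else 0.
  transitivity (\sum_(m1 <- s) if (u + v == m1)%MM then \sum_(m2 <- s)
      (if (c + d == m2)%MM then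
         if (u + v + (c + d) == m)%MM then K u v c d else 0 else 0) else 0).
    apply: eq_bigr => m1 _; rewrite sum_if0; apply: eq_bigr => m2 _.
    rewrite /T; case: ((u + v)%MM =P m1) => [<-|_]; last by case: ifP.
    by case: ((c + d)%MM =P m2) => [<-|_]; case: ifP.
  rewrite big_seq_pred1 ?mons_uniq // big_seq_pred1 ?mons_uniq //.
  case: eqP => [uvcd|_]; last by rewrite !if_same.
  by rewrite !mem_mons !ltnS -uvcd !mdegD leq_addr leq_addl.
rewrite (conv_pairs _ (ltnSn _)).
under eq_bigr => m1 _ do under eq_bigr => m2 _ do rewrite expand.
rewrite -(eq_bigr _ (fun u _ => eq_bigr _ (fun v _ => eq_bigr _ (fun c _ =>
  eq_bigr _ (fun d _ => collapse u v c d))))).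
rewrite exchange_big3; apply: eq_bigr => u _; rewrite exchange_big3; apply: eq_bigr => v _.
rewrite exchange_big3; apply: eq_bigr => c _.
by rewrite exchange_big3; apply: eq_bigr => d _.
Qed.

Lemma conv_interchange (K : 'X_{1..p} -> 'X_{1..p} -> 'X_{1..p} -> 'X_{1..p} -> V) m :
  conv (fun m1 m2 => conv (fun u v => conv (K u v) m2) m1) m =
  conv (fun m1 m2 => conv (fun u c => conv (fun v d => K u v c d) m2) m1) m.
Proof.
rewrite !conv3E; apply: eq_bigr => u _; rewrite [RHS]exchange_big.
apply: eq_bigr => v _; apply: eq_bigr => c _; apply: eq_bigr => d _.
by rewrite [(u + c + _)%MM]addmACA.
Qed.

End Convolution.

Lemma mcoeffM_conv p (P Q : {mpoly int[p]}) m :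
  (P * Q)@_m = conv (fun a b => P@_a * Q@_b) m.
Proof.
rewrite mcoeffM (conv_pairs _ (ltnSn _)) /mons big_map big_enum /=.
under [RHS]eq_bigr => a _ do rewrite big_map big_enum /= -big_mkcond /=.
by rewrite pair_big_dep; apply: eq_bigl => k; rewrite eq_sym.
Qed.

Lemma conv_coefM p q (V : zmodType) (s : seq 'X_{1..q})
    (F : 'X_{1..q} -> 'X_{1..q} -> V) (P : 'X_{1..q} -> {mpoly int[p]}) m :
  conv (fun m1 m2 => \sum_(u <- s) \sum_(v <- s) F u v *~ ((P u)@_m1 * (P v)@_m2)) m =
  \sum_(u <- s) \sum_(v <- s) F u v *~ (P u * P v)@_m.
Proof.
rewrite /conv exchange_big; apply: eq_bigr => u _; rewrite exchange_big.
by apply: eq_bigr => v _; rewrite mcoeffM_conv /conv mulrz_sumr.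
Qed.

Lemma mimgD p q (phi : simplex (ordP q) p) (u v : 'X_{1..q}) :
  mimg phi (u + v)%MM = mimg phi u * mimg phi v.
Proof. by rewrite /mimg -big_split /=; apply: eq_bigr => k _; rewrite mnmDE exprD. Qed.

Section NonUnitalAlgebra.
Variables (L : comPzRingType) (B : nalg L).

Lemma nmul0l (y : B) : nmul 0 y = 0.
Proof. by apply: (@addrI _ (nmul 0 y)); rewrite -nmulDl !addr0. Qed.

Lemma nmul0r (y : B) : nmul y 0 = 0.
Proof. by apply: (@addrI _ (nmul y 0)); rewrite -nmulDr !addr0. Qed.

Lemma nmul_suml (I : Type) (r : seq I) (P : pred I) (F : I -> B) y :
  nmul (\sum_(i <- r | P i) F i) y = \sum_(i <- r | P i) nmul (F i) y.
Proof. by elim/big_rec2: _ => [|i a b _ <-]; rewrite ?nmul0l ?nmulDl. Qed.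

Lemma nmul_sumr (I : Type) (r : seq I) (P : pred I) (F : I -> B) y :
  nmul y (\sum_(i <- r | P i) F i) = \sum_(i <- r | P i) nmul y (F i).
Proof. by elim/big_rec2: _ => [|i a b _ <-]; rewrite ?nmul0r ?nmulDr. Qed.

Lemma rnatmulE (x : B) k : @rnatmul L B x k = x *+ k.
Proof. by elim: k => [|k IH] //=; rewrite IH mulrS. Qed.

Lemma rintmulE (x : B) z : @rintmul L B x z = x *~ z.
Proof. by case: z => k; rewrite /rintmul rnatmulE. Qed.

Lemma ppullE p q (phi : simplex (ordP q) p) (G : polcar B q) (sq : seq 'X_{1..q}) m :
  uniq sq -> (forall v, v \notin sq -> G v = 0) ->
  ppull phi G m = \sum_(v <- sq) G v *~ (mimg phi v)@_m.
Proof.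
move=> sq_uniq G_sq; have [supp_uniq G_supp] := suppseq_spec (ex_intro _ sq G_sq).
rewrite /ppull /rsum; under eq_bigr => v _ do rewrite rintmulE.
by apply: big_supp_eq => // v /=; [move/G_supp | move/G_sq] => ->; rewrite mul0rz.
Qed.

Lemma ppull_bangE p (G : polcar B 0) m :
  ppull (bang p) G m = if m == 0%MM then G 0%MM else 0.
Proof.
rewrite (@ppullE _ _ _ _ [:: 0%MM]) // => [|v]; last by rewrite (nvar0_mnmE v) mem_seq1 eqxx.
by rewrite big_cons big_nil addr0 /mimg big_ord0 mcoeff1 eq_sym; case: eqP.
Qed.

Section Evaluation.
Variables (P : fposet) (Lp : {set P} -> bool).
Local Notation E := (DK B Lp).

Lemma rsum_evalE (I : Type) (r : seq I) (Pr : pred I) (G : I -> rcar E) p x m :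
  rsum r Pr G p x m = \sum_(i <- r | Pr i) G i p x m.
Proof. exact: (big_morph (fun F : rcar E => F p x m) (id1 := 0) (op1 := +%R)). Qed.

Lemma rintmul_evalE (c : rcar E) z p x m : rintmul c z p x m = c p x m *~ z.
Proof.
have rnatmul_evalE k : rnatmul c k p x m = c p x m *+ k.
  by elim: k => [|k IH] //=; rewrite /padd IH mulrS.
case: z => k; first exact: rnatmul_evalE.
by transitivity (- rnatmul c k.+1 p x m); rewrite // rnatmul_evalE.
Qed.

Lemma ppull_evalE p q (phi : simplex (ordP q) p) (G : polcar E q) m p' (x : simplex P p') v :
  finsupp G -> ppull phi G m p' x v = ppull phi (fun u => G u p' x v) m.
Proof.
move=> G_fin; have [supp_uniq G_supp] := suppseq_spec G_fin.
rewrite (ppullE _ _ supp_uniq) => [|u /G_supp ->] //.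
by rewrite /ppull rsum_evalE; apply: eq_bigr => u _; rewrite rintmul_evalE.
Qed.

End Evaluation.
End NonUnitalAlgebra.

(** * The exponential law for relative polynomial algebras *)

Section Uncurry.
Variables (L : comPzRingType) (B : nalg L) (P Q R : fposet) (Lp : {set P} -> bool).
Variables (f : mono R P) (g : mono R Q).
Local Notation E := (DK B Lp).
Local Notation C := (DX E Q).

(* The exponential law (B^P)^Q -> B^(P x Q), h |-> ((x, y) |-> sum_(m1, m2)
   h(y)_m1(x)_m2 t^(m1 + m2)), followed by restriction along z |-> (f z, g z). *)
Definition uncurry (h : rcar C) : fam B R :=
  fun p z m => conv (fun m1 m2 => (h p (monocomp g z) m1 p (monocomp f z) m2 : B)) m.

Lemma uncurryD h1 h2 :
  uncurry (@radd _ C h1 h2) = @radd _ (DX B R) (uncurry h1) (uncurry h2).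
Proof. by apply: fam_ext => p z m; rewrite /uncurry /= /conv -big_split. Qed.

Lemma uncurryZ k h : uncurry (@rscale _ C k h) = @rscale _ (DX B R) k (uncurry h).
Proof. by apply: fam_ext => p z m; rewrite /uncurry /= /conv scaler_sumr. Qed.

Lemma uncurryM h1 h2 :
  uncurry (@rmul _ C h1 h2) = @rmul _ (DX B R) (uncurry h1) (uncurry h2).
Proof.
apply: fam_ext => p z m; set x := monocomp f z; set y := monocomp g z.
pose f1 u c := (h1 p y u p x c : B); pose f2 v d := (h2 p y v p x d : B).
have coefM m1 m2 : (@rmul _ C h1 h2 p y m1 p x m2 : B) =
    conv (fun u v => conv (fun c d => nmul (f1 u c) (f2 v d)) m2) m1.
  by rewrite [LHS]/= /pmul rsum_evalE.
rewrite /uncurry -/x -/y (eq_conv coefM) conv_interchange.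
apply: eq_bigr => w _; rewrite /= nmul_suml; apply: eq_bigr => u _.
by rewrite nmul_sumr.
Qed.

Lemma coef2_supported h : @rmem _ C h -> forall p (y : simplex Q p) (x : simplex P p),
  exists N, (forall u, (N <= mdeg u)%N -> h p y u = rzero E) /\
    supported_below N (fun u v => (h p y u p x v : B)).
Proof.
move=> [h_coef _] p y x; have [hy_fin hy_mem] := h_coef p y.
have [N0 hy_N0] := finsupp_bound hy_fin.
pose Pb u N := forall v, (N <= mdeg v)%N -> (h p y u p x v : B) = 0.
have [N1 hy_N1] : exists N, forall u, u \in mons p N0 -> Pb u N.
  apply: exists_bound_seq => [u N N' NN' u_N v /(leq_trans NN')|u _]; first exact: u_N.
  have [[hyu_mem _] _] := hy_mem u; have [hyux_fin _] := hyu_mem p x.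
  by have [N hyux_N] := finsupp_bound hyux_fin; exists N => v /hyux_N.
exists (maxn N0 N1); split => [u|u v].
  by move/(leq_trans (leq_maxl _ _)); apply: hy_N0.
case/orP => [u_N|v_N]; first by rewrite hy_N0 ?(leq_trans (leq_maxl _ _) u_N).
have [u_N0|] := boolP (u \in mons p N0).
  by apply: (hy_N1 u u_N0); apply: leq_trans (leq_maxr _ _) v_N.
by rewrite mem_mons -leqNgt => u_N; rewrite hy_N0.
Qed.

Lemma uncurry_natural h : @rmem _ C h -> natural (uncurry h).
Proof.
move=> h_mem p q z phi; have [h_coef h_nat] := h_mem.
apply: functional_extensionality => m.
set x := monocomp f z; set y := monocomp g z.
have [N [hy_N F_N]] := coef2_supported h_mem y x.
set F := fun u v => (h q y u q x v : B) in F_N.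
have coef_pull m1 m2 :
    (h p (monocomp g (simcomp z phi)) m1 p (monocomp f (simcomp z phi)) m2 : B) =
    \sum_(u <- mons q N) \sum_(v <- mons q N)
      F u v *~ ((mimg phi u)@_m1 * (mimg phi v)@_m2).
  rewrite !monocomp_simcomp -/x -/y h_nat ppull_evalE; last exact: (h_coef q y).1.
  rewrite (ppullE _ _ (mons_uniq q N)) => [|u]; last first.
    by rewrite mem_mons -leqNgt => /hy_N ->.
  apply: eq_bigr => u _; have [[_ hyu_nat] _] := (h_coef q y).2 u.
  rewrite hyu_nat (ppullE _ _ (mons_uniq q N)) => [|v]; last first.
    by rewrite mem_mons -leqNgt => v_N; apply: F_N; rewrite v_N orbT.
  by rewrite mulrz_suml; apply: eq_bigr => v _; rewrite mulrC mulrzA.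
rewrite /uncurry (eq_conv coef_pull) conv_coefM.
rewrite (ppullE _ _ (mons_uniq q (N + N))) => [|w]; last first.
  by rewrite mem_mons -leqNgt; apply: conv_eq0 F_N.
rewrite (@sum_conv_regroup _ _ N F (fun w => (mimg phi w)@_m) F_N).
by apply: eq_bigr => u _; apply: eq_bigr => v _; rewrite mimgD.
Qed.

Lemma uncurry_mem (Lr : {set R} -> bool) h : @rmem _ C h ->
  (forall p (z : simplex R p), Lr (simimg z) -> Lp (simimg (monocomp f z))) ->
  @rmem _ (DK B Lr) (uncurry h).
Proof.
move=> h_mem f_L; have [h_coef _] := h_mem.
split; [split|] => [p z|p z|p z /f_L x_L].
- split=> //; have [N [_ F_N]] := coef2_supported h_mem (monocomp g z) (monocomp f z).
  by exists (mons p (N + N)) => m; rewrite mem_mons -leqNgt; apply: conv_eq0 F_N.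
- exact: uncurry_natural.
- apply: functional_extensionality => m; rewrite /uncurry /conv big1 // => u _.
  by have [_ hyu_ker] := (h_coef p (monocomp g z)).2 u; rewrite (hyu_ker _ _ x_L).
Qed.

Lemma pull_uncurry_cst (R' : fposet) (k : mono R' R) (c : Q) h : @rmem _ C h ->
  (forall w, g (k w) = c) -> pull k (uncurry h) = pull (mono_comp f k) (evpt h c).
Proof.
move=> [h_coef h_nat] gk_c; apply: fam_ext => p w m.
have gk_w : monocomp g (monocomp k w) = simcomp (vertex c) (bang p).
  by rewrite monocomp_comp; apply: monocomp_cst.
rewrite /pull /uncurry /evpt gk_w h_nat monocomp_comp.
apply: etrans (conv_delta0 _ m); apply: eq_conv => m1 m2.
by rewrite ppull_evalE ?ppull_bangE //; apply: (h_coef 0 (vertex c)).1.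
Qed.

End Uncurry.

Section SubdividedProjections.
Variables (n r s : nat).

Definition sd_fst : mono (sdn (s + r) (cubeI n)) (sdn r (cube n)) :=
  mono_comp (gamman s r (cube n)) (sdn_map (s + r) (fst_mono _ _)).

Definition sd_snd : mono (sdn (s + r) (cubeI n)) (sdn s Iposet) :=
  mono_comp (sd_gamma_iter s r Iposet) (sdn_map (s + r) (snd_mono _ _)).

Lemma sd_fst_bdry p (z : simplex (sdn (s + r) (cubeI n)) p) :
  @sdsub (s + r) _ (@bdryI n) (simimg z) ->
  @sdsub r _ (@bdry n) (simimg (monocomp sd_fst z)).
Proof.
move=> z_bdry; rewrite simimg_monocomp (imset_comp (gamman s r (cube n))).
apply: (sdsub_gamman (@bdry_dclosed n)).
exact: (sdsub_map (@bdry_dclosed n) (@bdryI_fst n) z_bdry).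
Qed.

Lemma sd_fst_idxd i w : sd_fst (sdn_map (s + r) (idxd n i) w) = gamman s r (cube n) w.
Proof. by rewrite /= sdn_mapK. Qed.

Lemma sd_snd_idxd i w : sd_snd (sdn_map (s + r) (idxd n i) w) = sdn_vertex s (i : Iposet).
Proof.
by rewrite /= (@sdn_map_comp_cst _ _ _ Iposet _ (snd_mono _ _) i) // sd_gamma_iter_vertex.
Qed.

End SubdividedProjections.

Theorem lemma3p7 (L : comPzRingType) (A B : nalg L) (n r s : nat)
  (H : A -> rcar (DX (BS B n r) (sdn s Iposet)))
  (hH : is_hom H) :
  exists Ht : A -> rcar (BSt B n (s + r)),
    is_hom Ht /\
    forall (i : bool) (a : A),
      @dstarB L B n (s + r) i (Ht a) =
        @tau L B n r s (@dstar L (BS B n r) s i (H a)).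
Proof.
case: hH => H_mem HD HZ HM.
exists (fun a => uncurry (sd_fst n r s) (sd_snd n r s) (H a)); split; first split.
- by move=> a; apply: uncurry_mem (H_mem a) (@sd_fst_bdry n r s).
- by move=> a b; rewrite HD; apply: uncurryD.
- by move=> k a; rewrite HZ; apply: uncurryZ.
- by move=> a b; rewrite HM; apply: uncurryM.
- move=> i a; rewrite /dstarB /tau /dstar evpt_pull sdn_map_vertex.
  rewrite (pull_uncurry_cst _ (H_mem a) (@sd_snd_idxd n r s i)).
  by apply: eq_pull => w; apply: sd_fst_idxd.
Qed.
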